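(* Let $\Lambda\subset\mathbb{C}$ be a lattice. Let $\mathcal{V}\subset\mathbb{R}^2$ be a non-empty subset of the form $\mathcal{V}=V(\mathbb{R})$ for some algebraic subvariety $V\subset\mathbb{A}^2_\mathbb{R}$, such that $\mathcal{V}$ cannot be written as $V_1(\mathbb{R})\cup V_2(\mathbb{R})$ with $V_1,V_2\subset\mathbb{A}^2_\mathbb{R}$ algebraic subvarieties and both inclusions $V_i(\mathbb{R})\subset\mathcal{V}$ proper. If $f(\mathcal{V})$ is contained in a bialgebraic curve for $\wp_{\Lambda\times\overline{\Lambda}}$, where $f(v,w)=(v+iw,v-iw)$, then $\mathcal{V}$ is weakly bialgebraic for $\mathcal{P}_\Lambda$.
   Context: Identify $\mathbb{R}^2$ with $\mathbb{C}$ via $(x,y)\mapsto x+iy$, and $\mathbb{R}^2\subset\mathbb{C}^2$. For a lattice $\Lambda\subset\mathbb{C}$ let $\wp_\Lambda:\mathbb{C}\to\mathbb{P}^1(\mathbb{C})$ be its Weierstrass $\wp$-function and $\mathcal{P}_\Lambda:\mathbb{R}^2\smallsetminus\Lambda\to\mathbb{R}^2$, $(x,y)\mapsto(\mathrm{Re}\,\wp_\Lambda(x+iy),\mathrm{Im}\,\wp_\Lambda(x+iy))$. A non-empty subset $\mathcal{V}\subsetneq\mathbb{R}^2$ is called weakly bialgebraic for $\mathcal{P}_\Lambda$ if (i) there exist algebraic subvarieties $V\subset\mathbb{A}^2_\mathbb{R}$ and $W\subsetneq\mathbb{A}^2_\mathbb{R}$ with $\mathcal{V}=V(\mathbb{R})$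 and $\mathcal{P}_\Lambda(\mathcal{V}\cap(\mathbb{R}^2\smallsetminus\Lambda))\subset W(\mathbb{R})$; and (ii) $\mathcal{V}$ cannot be written as $V_1(\mathbb{R})\cup V_2(\mathbb{R})$ with $V_i$ algebraic subvarieties and $V_i(\mathbb{R})\subsetneq\mathcal{V}$. Let $\wp_{\Lambda\times\overline{\Lambda}}=\wp_\Lambda\times\wp_{\overline{\Lambda}}:\mathbb{C}^2\to\mathbb{P}^1(\mathbb{C})^2$, with $\overline{\Lambda}$ the complex conjugate lattice. An irreducible algebraic curve $C\subset\mathbb{C}^2$ is bialgebraic for $\wp_{\Lambda\times\overline{\Lambda}}$ if $\wp_{\Lambda\times\overline{\Lambda}}(C)$ is not Zariski dense in $\mathbb{P}^1(\mathbb{C})^2$. *)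

From HB Require Import structures.
From mathcomp Require Import all_boot all_order all_algebra.
From mathcomp Require Import boolp classical_sets reals topology normedtype sequences.
From mathcomp Require Import complex.
Import Order.TTheory GRing.Theory Num.Theory.
Import numFieldTopology.Exports numFieldNormedType.Exports.

Set Implicit Arguments.
Unset Strict Implicit.
Unset Printing Implicit Defensive.

Local Open Scope classical_set_scope.
Local Open Scope ring_scope.

Definition Cc (R : realType) : numClosedFieldType := R[i].

Definition toC (R : realType) (p : R * R) : Cc R := (p.1 +i* p.2)%C.

(* (w1, w2) is an R-basis of C: the lattice is Lambda = Z w1 + Z w2. *)
Definition lattice_basis (R : realType) (w1 w2 : Cc R) : Prop :=
  forall a b : R, (a%:C)%C * w1 + (b%:C)%C * w2 = 0 -> a = 0 /\ b = 0.

Definition in_lattice (R : realType) (w1 w2 : Cc R) (z : Cc R) : Prop :=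
  exists m n : int, z = m%:~R * w1 + n%:~R * w2.

Definition wp_term (R : realType) (w1 w2 z : Cc R) (m n : int) : Cc R :=
  let w := m%:~R * w1 + n%:~R * w2 in
  if (m == 0) && (n == 0) then 0 else ((z - w) ^- 2 - w ^- 2).

Definition wp_partial (R : realType) (w1 w2 z : Cc R) (N : nat) : Cc R :=
  z ^- 2 + \sum_(i < (N + N).+1) \sum_(j < (N + N).+1)
              wp_term w1 w2 z (i%:Z - N%:Z) (j%:Z - N%:Z).

(* Weierstrass p-function C -> P^1(C); P^1(C) is modelled as option C with
   None = the point at infinity. *)
Definition wp (R : realType) (w1 w2 : Cc R) (z : Cc R) : option (Cc R) :=
  if `[< in_lattice w1 w2 z >] then None
  else Some (lim (wp_partial w1 w2 z @ \oo)).

Definition calP (R : realType) (w1 w2 : Cc R) (p : R * R) : option (R * R) :=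
  omap (fun z : Cc R => (complex.Re z, complex.Im z)) (wp w1 w2 (toC p)).

(* Real algebraic subsets of A^2_R.  A bivariate polynomial is an element
   of {poly {poly R}}: inner variable x, outer variable y.              *)

Definition eval2 (K : nzRingType) (P : {poly {poly K}}) (q : K * K) : K :=
  (P.[q.2%:P]).[q.1].

Definition zero_set (K : nzRingType) (ps : seq {poly {poly K}}) : set (K * K) :=
  [set q | forall P, P \in ps -> eval2 P q = 0].

Definition real_alg_set (R : realType) (S : set (R * R)) : Prop :=
  exists ps : seq {poly {poly R}}, S = zero_set ps.

(* S = W(R) for some algebraic subvariety W of A^2_R with W <> A^2_R
   (i.e. some defining polynomial is non-zero). *)
Definition real_proper_alg_set (R : realType) (S : set (R * R)) : Prop :=
  exists ps : seq {poly {poly R}},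
    (exists2 P, P \in ps & P != 0) /\ S = zero_set ps.

Definition real_alg_irreducible (R : realType) (S : set (R * R)) : Prop :=
  ~ (exists V1 V2 : set (R * R),
       [/\ real_alg_set V1, real_alg_set V2, V1 `<` S, V2 `<` S &
           S = V1 `|` V2]).

Definition weakly_bialgebraic (R : realType) (w1 w2 : Cc R)
    (S : set (R * R)) : Prop :=
  [/\ S !=set0, S `<` setT,
      real_alg_set S /\
      (exists W : set (R * R), real_proper_alg_set W /\
         (forall p q, S p -> calP w1 w2 p = Some q -> W q))
    & real_alg_irreducible S].

Definition poly2_const (K : nzRingType) (G : {poly {poly K}}) : Prop :=
  exists c : K, G = c%:P%:P.

(* irreducible element of C[z1,z2] (non-zero, non-unit, no non-trivial
   factorisation); units of C[z1,z2] are the non-zero constants *)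
Definition irreducible2 (K : nzRingType) (F : {poly {poly K}}) : Prop :=
  ~ poly2_const F /\
  forall G H : {poly {poly K}}, F = G * H -> poly2_const G \/ poly2_const H.

(* Zariski topology on P^1(C) x P^1(C).  Homogeneous coordinates of a point
   of P^1 = option C: Some a = [a:1], None = [1:0]. *)
Definition hcoord (K : nzRingType) (p : option K) : K * K :=
  match p with Some a => (a, 1) | None => (1, 0) end.

Definition bihom_eval (K : nzRingType) (d e : nat) (c : nat -> nat -> K)
    (q : option K * option K) : K :=
  let x := hcoord q.1 in let y := hcoord q.2 in
  \sum_(i < d.+1) \sum_(j < e.+1)
     c i j * x.1 ^+ i * x.2 ^+ (d - i) * y.1 ^+ j * y.2 ^+ (e - j).

Definition zariski_closed_P1P1 (K : nzRingType)
    (Z : set (option K * option K)) : Prop :=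
  exists (k : nat) (d e : 'I_k -> nat) (c : 'I_k -> nat -> nat -> K),
    Z = [set q | forall t, bihom_eval (d t) (e t) (c t) q = 0].

Definition zariski_dense_P1P1 (K : nzRingType)
    (T : set (option K * option K)) : Prop :=
  forall Z, zariski_closed_P1P1 Z -> T `<=` Z -> Z = setT.

Definition wp_prod (R : realType) (w1 w2 : Cc R) (z : Cc R * Cc R)
    : option (Cc R) * option (Cc R) :=
  (wp w1 w2 z.1, wp (w1^*)%R (w2^*)%R z.2).

Definition bialgebraic_curve (R : realType) (w1 w2 : Cc R)
    (F : {poly {poly Cc R}}) : Prop :=
  irreducible2 F /\ ~ zariski_dense_P1P1 (wp_prod w1 w2 @` zero_set [:: F]).

Definition fmap2 (R : realType) (p : R * R) : Cc R * Cc R :=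
  ((p.1 +i* p.2)%C, (p.1 -i* p.2)%C).

(* The series defining wp for the conjugate lattice, evaluated at the conjugate
   point, is termwise the conjugate series, so f(p) = (z, z^* ) is mapped to
   (wp z, (wp z)^* ).  If
   wp_prod(C) is not Zariski dense, some bihomogeneous form vanishes on it
   without vanishing identically; on the affine chart it is a polynomial h with
   h(wp z, (wp z)^* ) = 0 on S.  Writing h(x + iy, x - iy) = P(x,y) + i Q(x,y)
   with real P, Q gives W = {P = Q = 0}, a proper subset because f(R^2) is
   Zariski dense in C^2.  The same density shows S <> R^2, since F is not a
   constant. *)

From HB Require Import structures.
From mathcomp Require Import all_boot all_order all_algebra.
From mathcomp Require Import boolp classical_sets reals topology normedtype sequences.
From mathcomp Require Import complex.
From mathcomp Require Import ring.
Import Order.TTheory GRing.Theory Num.Theory.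
Import numFieldTopology.Exports numFieldNormedType.Exports.
Local Open Scope classical_set_scope.
Local Open Scope ring_scope.
Set Implicit Arguments.
Unset Strict Implicit.

Section BivariateEvaluation.
Variable K : comNzRingType.
Implicit Types (H G : {poly {poly K}}) (q : K * K).

Lemma eval2D H G q : eval2 (H + G) q = eval2 H q + eval2 G q.
Proof. by rewrite /eval2 !hornerD. Qed.

Lemma eval2B H G q : eval2 (H - G) q = eval2 H q - eval2 G q.
Proof. by rewrite /eval2 !hornerD !hornerN. Qed.

Lemma eval2M H G q : eval2 (H * G) q = eval2 H q * eval2 G q.
Proof. by rewrite /eval2 !hornerM. Qed.

Lemma eval20 q : eval2 0 q = 0.
Proof. by rewrite /eval2 !horner0. Qed.

Lemma eval2C (c : K) q : eval2 c%:P%:P q = c.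
Proof. by rewrite /eval2 !hornerC. Qed.

Lemma eval2X1 q : eval2 ('X%:P : {poly {poly K}}) q = q.1.
Proof. by rewrite /eval2 hornerC hornerX. Qed.

Lemma eval2X2 q : eval2 ('X : {poly {poly K}}) q = q.2.
Proof. by rewrite /eval2 hornerX hornerC. Qed.

Lemma eval2MXaddC H (p : {poly K}) q :
  eval2 (H * 'X + p%:P) q = eval2 H q * q.2 + p.[q.1].
Proof. by rewrite /eval2 hornerMXaddC hornerD hornerM hornerC. Qed.

Lemma eval2_ind (T : Type) (Pr : (T -> K) -> Prop) (A B : T -> K) :
  (forall f g, Pr f -> Pr g -> Pr (fun t => f t + g t)) ->
  (forall f g, Pr f -> Pr g -> Pr (fun t => f t * g t)) ->
  (forall c, Pr (fun=> c)) -> Pr A -> Pr B ->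
  forall H, Pr (fun t => eval2 H (A t, B t)).
Proof.
move=> PrD PrM PrC PrA PrB.
have Pr_horner (p : {poly K}) : Pr (fun t => p.[A t]).
  elim/poly_ind: p => [|p c IHp].
    by under eq_fun do rewrite horner0; exact: PrC.
  by under eq_fun do rewrite hornerMXaddC; exact: PrD (PrM _ _ IHp PrA) (PrC c).
elim/poly_ind => [|H p IH].
  by under eq_fun do rewrite eval20; exact: PrC.
by under eq_fun do rewrite eval2MXaddC; exact: PrD (PrM _ _ IH PrB) (Pr_horner p).
Qed.

Definition poly_fun2 (f : K * K -> K) := exists H, eval2 H =1 f.

Lemma poly_fun2D f g : poly_fun2 f -> poly_fun2 g -> poly_fun2 (fun q => f q + g q).
Proof. by move=> [H Hf] [G Gg]; exists (H + G) => q; rewrite eval2D Hf Gg. Qed.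

Lemma poly_fun2B f g : poly_fun2 f -> poly_fun2 g -> poly_fun2 (fun q => f q - g q).
Proof. by move=> [H Hf] [G Gg]; exists (H - G) => q; rewrite eval2B Hf Gg. Qed.

Lemma poly_fun2M f g : poly_fun2 f -> poly_fun2 g -> poly_fun2 (fun q => f q * g q).
Proof. by move=> [H Hf] [G Gg]; exists (H * G) => q; rewrite eval2M Hf Gg. Qed.

Lemma poly_fun2C c : poly_fun2 (fun=> c).
Proof. by exists c%:P%:P => q; rewrite eval2C. Qed.

Lemma poly_fun2_fst : poly_fun2 fst.
Proof. by exists 'X%:P => q; rewrite eval2X1. Qed.

Lemma poly_fun2_snd : poly_fun2 snd.
Proof. by exists 'X => q; rewrite eval2X2. Qed.

Lemma poly_fun2_comp H A B : poly_fun2 A -> poly_fun2 B ->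
  poly_fun2 (fun q => eval2 H (A q, B q)).
Proof. by move=> PA PB; exact: eval2_ind poly_fun2D poly_fun2M poly_fun2C PA PB H. Qed.

End BivariateEvaluation.

Arguments poly_fun2_fst {K}.
Arguments poly_fun2_snd {K}.

Section VanishingOnIntegerPoints.
Variable K : numDomainType.

Lemma poly_natr_eq0 (p : {poly K}) : (forall n : nat, p.[n%:R] = 0) -> p = 0.
Proof.
move=> p0; apply/eqP; apply: contraT => /max_poly_roots.
move=> /(_ [seq n%:R | n <- iota 0 (size p)]); rewrite size_map size_iota ltnn.
apply; first by apply/allP => _ /mapP[n _ ->]; apply/rootP.
by rewrite map_inj_uniq ?iota_uniq // => m n /eqP; rewrite eqr_nat => /eqP.
Qed.

Lemma poly2_natr_eq0 (F : {poly {poly K}}) :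
  (forall n m : nat, eval2 F (n%:R, m%:R) = 0) -> F = 0.
Proof.
move=> F0; apply/eqP; rewrite -swapXY_eq0; apply/eqP/polyP => i.
rewrite coef0; apply: poly_natr_eq0 => m.
have /polyP/(_ i) := poly_natr_eq0 (p := F.[m%:R%:P]) (F0 ^~ m).
by rewrite horner_polyC coef_map coef0.
Qed.

End VanishingOnIntegerPoints.

Section ProjectiveForms.
Variable K : nzRingType.
Implicit Types (d e : nat) (c : nat -> nat -> K).

Lemma not_zariski_dense_P1P1 (T : set (option K * option K)) :
  ~ zariski_dense_P1P1 T -> exists d e c,
    (forall q, T q -> bihom_eval d e c q = 0) /\ exists q, bihom_eval d e c q != 0.
Proof.
move=> /existsNP[Z /not_implyP[[k [d [e [c ->]]]] /not_implyP[TZ /eqP/setTPn[q0]]]].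
move=> /existsNP[t /eqP ct]; exists (d t), (e t), (c t).
by split; [move=> q /TZ; apply | exists q0].
Qed.

Definition bihom_affine d e c : {poly {poly K}} :=
  \poly_(j < e.+1) \poly_(i < d.+1) c i j.

Lemma bihom_affine_neq0 d e c q :
  bihom_eval d e c q != 0 -> bihom_affine d e c != 0.
Proof.
apply: contraNneq => c0; rewrite /bihom_eval; apply/eqP/big1 => i _; apply: big1 => j _.
have /polyP/(_ j)/polyP/(_ i) := c0.
by rewrite !coef0 coef_poly ltn_ord coef_poly ltn_ord => ->; rewrite !mul0r.
Qed.

End ProjectiveForms.

Lemma eval2_bihom_affine (K : comNzRingType) d e (c : nat -> nat -> K) (a b : K) :
  eval2 (bihom_affine d e c) (a, b) = bihom_eval d e c (Some a, Some b).
Proof.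
rewrite /eval2 /bihom_eval /= horner_poly horner_sum exchange_big /=.
apply: eq_bigr => j _; rewrite hornerM -polyC_exp hornerC horner_poly mulr_suml.
by apply: eq_bigr => i _; rewrite !expr1n !mulr1 mulrAC.
Qed.

Section ComplexPlane.
Variable R : realType.
Local Notation C := (Cc R).
Implicit Types (F : {poly {poly C}}).

Lemma cvg_conj (u : nat -> C) (l : C) :
  u @ \oo --> l -> (fun n => (u n)^*) @ \oo --> l^*.
Proof.
move=> /cvgrPdist_lt ul; apply/cvgrPdist_lt => eps eps0.
by near do rewrite -rmorphB norm_conjC; apply: ul.
Unshelve. all: end_near.
Qed.

Lemma lim_conj (u : nat -> C) :
  lim ((fun n => (u n)^*) @ \oo) = (lim (u @ \oo))^*.
Proof.
have [[l ul]|ncu] := pselect (exists l : C, u @ \oo --> l).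
  by rewrite (cvg_lim _ ul) // (cvg_lim _ (cvg_conj ul)).
rewrite /lim /lim_in !getPN ?conjC0 // => l ul; apply: ncu; first by exists l.
by exists l^*; have := cvg_conj ul; under eq_fun do rewrite conjCK.
Qed.

Lemma in_lattice_conj (w1 w2 z : C) :
  in_lattice w1 w2 z -> in_lattice w1^* w2^* z^*.
Proof. by case=> m [n ->]; exists m, n; rewrite rmorphD !rmorphM !rmorph_int. Qed.

Lemma wp_partial_conj (w1 w2 z : C) N :
  (wp_partial w1 w2 z N)^* = wp_partial w1^* w2^* z^* N.
Proof.
rewrite /wp_partial rmorphD fmorphV rmorphXn rmorph_sum; congr (_ + _).
apply: eq_bigr => i _; rewrite rmorph_sum; apply: eq_bigr => j _.
rewrite /wp_term; case: ifP => _; first by rewrite rmorph0.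
by rewrite rmorphB !fmorphV !rmorphXn rmorphB rmorphD !rmorphM !rmorph_int.
Qed.

Lemma wp_conj (w1 w2 z : C) : wp w1^* w2^* z^* = omap (fun x => x^*) (wp w1 w2 z).
Proof.
rewrite /wp; case: (asboolP (in_lattice w1 w2 z)) => [Lz|NLz].
  by rewrite asboolT //; apply: in_lattice_conj.
rewrite asboolF => [/=|/in_lattice_conj]; last by rewrite !conjCK.
by rewrite -lim_conj; under eq_fun do rewrite wp_partial_conj.
Qed.

Lemma wp_prod_fmap2 (w1 w2 z : C) p :
  wp w1 w2 (toC p) = Some z -> wp_prod w1 w2 (fmap2 p) = (Some z, Some z^*).
Proof. by move=> wpz; rewrite /wp_prod (_ : fmap2 p = (toC p, (toC p)^*)) // wp_conj wpz. Qed.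

Lemma fmap2_ReIm (z : C) : fmap2 (complex.Re z, complex.Im z) = (z, z^*).
Proof. by case: z. Qed.

Lemma fmap2E (p : R * R) :
  fmap2 p = (p.1%:C + 'i * p.2%:C, p.1%:C - 'i * p.2%:C)%C.
Proof.
by rewrite /fmap2 [(_ +i* p.2)%C]complexE [(_ -i* _)%C]complexE /= rmorphN mulrN.
Qed.

Lemma poly2_subst_fmap2 F : exists G : {poly {poly C}},
  forall u v, eval2 G (u, v) = eval2 F (u + 'i * v, u - 'i * v)%C.
Proof.
have iv : poly_fun2 (fun q : C * C => 'i%C * q.2) := poly_fun2M (poly_fun2C _) poly_fun2_snd.
have [G FG] := poly_fun2_comp F (poly_fun2D poly_fun2_fst iv) (poly_fun2B poly_fun2_fst iv).
by exists G => u v; rewrite FG.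
Qed.

Lemma fmap2_linear_surj (a b : C) : exists u v : C, a = u + 'i * v /\ b = u - 'i * v.
Proof.
exists ((a + b) / 2), (- 'i * (a - b) / 2).
have -> : 'i * (- 'i * (a - b) / 2) = (a - b) / 2 :> C.
  by rewrite !mulrA mulrN -expr2 sqr_i opprK mul1r.
have two0 : (2 : C) != 0 by rewrite pnatr_eq0.
by split; field.
Qed.

Lemma fmap2_Zariski_dense F : (forall p : R * R, eval2 F (fmap2 p) = 0) -> F = 0.
Proof.
move=> F0; have [G FG] := poly2_subst_fmap2 F.
have G0 : G = 0.
  apply: poly2_natr_eq0 => n m.
  by rewrite FG -!(rmorph_nat (real_complex R)) -(F0 (n%:R, m%:R)) fmap2E.
apply: poly2_natr_eq0 => n m.
have [u [v [-> ->]]] := fmap2_linear_surj n%:R m%:R.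
by rewrite -FG G0 eval20.
Qed.

Definition cplx_poly_fun2 (g : R * R -> C) :=
  exists P Q : {poly {poly R}}, forall q, g q = (eval2 P q +i* eval2 Q q)%C.

Lemma cplx_poly_fun2D f g :
  cplx_poly_fun2 f -> cplx_poly_fun2 g -> cplx_poly_fun2 (fun q => f q + g q).
Proof.
move=> [P [Q fPQ]] [P' [Q' gPQ]]; exists (P + P'), (Q + Q') => q.
by rewrite fPQ gPQ !eval2D.
Qed.

Lemma cplx_poly_fun2M f g :
  cplx_poly_fun2 f -> cplx_poly_fun2 g -> cplx_poly_fun2 (fun q => f q * g q).
Proof.
move=> [P [Q fPQ]] [P' [Q' gPQ]]; exists (P * P' - Q * Q'), (P * Q' + Q * P') => q.
by rewrite fPQ gPQ eval2B eval2D !eval2M.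
Qed.

Lemma cplx_poly_fun2C c : cplx_poly_fun2 (fun=> c).
Proof. by case: c => a b; exists a%:P%:P, b%:P%:P => q; rewrite !eval2C. Qed.

Lemma cplx_poly_fun2_z : cplx_poly_fun2 (fun q => q.1 +i* q.2)%C.
Proof. by exists 'X%:P, 'X => q; rewrite eval2X1 eval2X2. Qed.

Lemma cplx_poly_fun2_zbar : cplx_poly_fun2 (fun q => q.1 -i* q.2)%C.
Proof. by exists 'X%:P, (0 - 'X) => q; rewrite eval2X1 eval2B eval20 eval2X2 sub0r. Qed.

Lemma eval2_fmap2_ReIm F : F != 0 -> exists P Q : {poly {poly R}},
  (P != 0 \/ Q != 0) /\ forall p, eval2 F (fmap2 p) = (eval2 P p +i* eval2 Q p)%C.
Proof.
move=> /eqP F0.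
have [P [Q FPQ]] : cplx_poly_fun2 (fun p => eval2 F (fmap2 p)).
  exact: eval2_ind cplx_poly_fun2D cplx_poly_fun2M cplx_poly_fun2C
                   cplx_poly_fun2_z cplx_poly_fun2_zbar F.
exists P, Q; split=> //.
have [P0|] := eqVneq P 0; last by left.
have [Q0|] := eqVneq Q 0; last by right.
by exfalso; apply/F0/fmap2_Zariski_dense => p; rewrite FPQ P0 Q0 eval20.
Qed.

End ComplexPlane.

Theorem lemma2p3p4 (R : realType) (w1 w2 : Cc R) (S : set (R * R)) :
  lattice_basis w1 w2 ->
  S !=set0 ->
  real_alg_set S ->
  real_alg_irreducible S ->
  (exists F : {poly {poly Cc R}},
      bialgebraic_curve w1 w2 F /\ (@fmap2 R) @` S `<=` zero_set [:: F]) ->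
  weakly_bialgebraic w1 w2 S.
Proof.
move=> _ S0 algS irrS [F [[[Fnc _] Fnd] fSF]].
have FfS p : S p -> eval2 F (fmap2 p) = 0.
  by move=> Sp; apply: (fSF (fmap2 p)); [exists p | rewrite mem_head].
have S_proper : S `<` setT.
  split=> // ST; apply: Fnc; exists 0; rewrite !polyC0.
  by apply: fmap2_Zariski_dense => p; apply/FfS/ST.
have [d [e [c [cwp [q0 cq0]]]]] := not_zariski_dense_P1P1 Fnd.
have [P [Q [PQ0 PQ]]] := eval2_fmap2_ReIm (bihom_affine_neq0 cq0).
split=> //; split=> //; exists (zero_set [:: P; Q]); split.
  exists [:: P; Q]; split=> //.
  by case: PQ0 => [P0|Q0]; [exists P | exists Q]; rewrite ?inE ?eqxx ?orbT.
move=> p q Sp; rewrite /calP; case wpz: wp => [z|] //= [<-].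
have : bihom_eval d e c (Some z, Some z^*) = 0.
  by apply: cwp; rewrite -(wp_prod_fmap2 wpz); exists (fmap2 p) => //; apply: fSF; exists p.
rewrite -eval2_bihom_affine -fmap2_ReIm PQ => /eqP; rewrite eq_complex /=.
by move=> /andP[/eqP P0 /eqP Q0] G; rewrite !inE => /orP[]/eqP->.
Qed.
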